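(* Let $g:\mathbb{Z}^d\to[0,\infty)$ be of the form $g(z)=\prod_{i=1}^d g_i(z_i)$, where each $g_i:\mathbb{Z}\to[0,\infty)$ is summable and log-concave. Let $f:\mathbb{Z}^d\to[0,\infty)$ be summable and log-supermodular. Then $f*g(x)=\sum_{z\in\mathbb{Z}^d}f(x-z)g(z)$ is log-supermodular on $\mathbb{Z}^d$.
   Context: A function $h:\mathbb{Z}\to[0,\infty)$ is log-concave if $\{h>0\}=I\cap\mathbb{Z}$ for some (possibly infinite) interval $I\subseteq\mathbb{R}$ and $h(n)^2\ge h(n+1)h(n-1)$ for all $n\in I$ (equivalently, $h$ admits a log-concave interpolation on $\mathbb{R}$). For $x,y\in\mathbb{Z}^d$, $(x\wedge y)_i=\min(x_i,y_i)$, $(x\vee y)_i=\max(x_i,y_i)$; $f$ is log-supermodular if $f(x)f(y)\le f(x\wedge y)f(x\vee y)$ for all $x,y\in\mathbb{Z}^d$. *)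

From HB Require Import structures.
From mathcomp Require Import all_boot all_order all_algebra.
From mathcomp Require Import all_classical all_reals all_analysis.
Set Implicit Arguments. Unset Strict Implicit. Unset Printing Implicit Defensive.
Import Order.TTheory GRing.Theory Num.Theory.
Local Open Scope ring_scope.
Local Open Scope classical_set_scope.

Notation Zd d := {ffun 'I_d -> int}.

Definition zmeet (d : nat) (x y : Zd d) : Zd d := [ffun i => Num.min (x i) (y i)].
Definition zjoin (d : nat) (x y : Zd d) : Zd d := [ffun i => Num.max (x i) (y i)].

Definition log_concave_Z (R : realType) (h : int -> R) : Prop :=
  exists I : interval R,
    (forall n : int, 0 < h n <-> (n%:~R : R) \in I) /\
    (forall n : int, (n%:~R : R) \in I -> h (n + 1) * h (n - 1) <= h n ^+ 2).

Definition log_supermodular (R : realType) (d : nat) (f : Zd d -> R) : Prop :=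
  forall x y : Zd d, f x * f y <= f (zmeet x y) * f (zjoin x y).

Definition summable_fun (T : choiceType) (R : realType) (f : T -> R) : Prop :=
  summable setT (fun z => (f z)%:E).

Definition zconv (R : realType) (d : nat) (f g : Zd d -> R) (x : Zd d) : R :=
  fine (\esum_(z in setT) ((f (x - z) * g z)%:E))%E.

(* A log-concave sequence g on Z yields a totally positive kernel:
   g (x - w) g (y - v) <= g (x /\ y - w /\ v) g (x \/ y - w \/ v), and a product of
   such kernels has the same property on Z^d.  Together with the log-supermodularity
   of f, the integrand (x, w) |-> f w g (x - w) then satisfies the hypothesis of the
   Ahlswede-Daykin four functions theorem in the variable w, and summing over w gives
   (f*g)(x) (f*g)(y) <= (f*g)(x /\ y) (f*g)(x \/ y).  The four functions theorem is
   proved on finite boxes {0, ..., n}^d by induction on the coordinates, starting from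
   the case of a chain, and extended to Z^d by exhausting it with boxes. *)

From HB Require Import structures.
From mathcomp Require Import all_boot all_order all_algebra.
From mathcomp Require Import all_classical all_reals all_analysis.
From mathcomp Require Import ring lra zify.
Import Order.TTheory GRing.Theory Num.Theory.
Local Open Scope ring_scope.
Set Implicit Arguments. Unset Strict Implicit. Unset Printing Implicit Defensive.

Section FourFunctionsChain.
Variable R : realFieldType.

Lemma lerD_of_mul_le (p q P Q : R) : 0 <= p -> 0 <= q -> 0 <= Q ->
  p <= P -> q <= P -> p * q <= P * Q -> p + q <= P + Q.
Proof.
move=> p0 q0 Q0 pP qP pqPQ.
have [P0|P_neq0] := eqVneq P 0; first by subst P; lra.
have P_gt0 : 0 < P by rewrite lt_def P_neq0 (le_trans p0).
have : 0 <= (P - p) * (P - q) by rewrite mulr_ge0 // subr_ge0.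
by rewrite -(ler_pM2l P_gt0 (p + q)) => ?; nra.
Qed.

Lemma four_functions_chain (N : nat) (a b c e : nat -> R) :
  (forall i, 0 <= a i) -> (forall i, 0 <= b i) ->
  (forall i, 0 <= c i) -> (forall i, 0 <= e i) ->
  (forall i j, (i < N)%N -> (j < N)%N -> a i * b j <= c (minn i j) * e (maxn i j)) ->
  (\sum_(i < N) a i) * (\sum_(i < N) b i) <= (\sum_(i < N) c i) * (\sum_(i < N) e i).
Proof.
move=> a0 b0 c0 e0; elim: N => [|N IH] abce; first by rewrite !big_ord0 !mul0r.
have NN : a N * b N <= c N * e N by have := abce N N (ltnSn N) (ltnSn N); rewrite minnn maxnn.
rewrite !big_ord_recr /=.
set A := \sum_(i < N) a i; set B := \sum_(i < N) b i.
set C := \sum_(i < N) c i; set D := \sum_(i < N) e i.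
have {}IH : A * B <= C * D by apply: IH => i j iN jN; apply: abce; apply: ltnW.
(* Termwise, [lerD_of_mul_le] with [p, q, P, Q := a i b N, a N b i, c i e N, c N e i]. *)
have cross : A * b N + a N * B <= C * e N + c N * D.
  rewrite /A /B /C /D !mulr_suml !mulr_sumr -!big_split /=.
  apply: ler_sum => i _.
  have iN : (i < N.+1)%N := ltnW (ltn_ord i).
  have iN' : (i <= N)%N := ltnW (ltn_ord i).
  have iNi := abce i N iN (ltnSn N); rewrite (minn_idPl iN') (maxn_idPr iN') in iNi.
  have Nii := abce N i (ltnSn N) iN; rewrite (minn_idPr iN') (maxn_idPl iN') in Nii.
  have ii := abce i i iN iN; rewrite minnn maxnn in ii.
  apply: lerD_of_mul_le; rewrite ?mulr_ge0 //.
  have -> : a i * b N * (a N * b i) = (a i * b i) * (a N * b N) by ring.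
  have -> : c i * e N * (c N * e i) = (c i * e i) * (c N * e N) by ring.
  by apply: ler_pM; rewrite ?mulr_ge0.
nra.
Qed.

End FourFunctionsChain.

Section FourFunctionsBox.
Variables (R : realFieldType) (d n : nat).
Local Notation box := {ffun 'I_d -> 'I_n.+1}.

Definition fmeet (a b : box) : box := [ffun i => if (a i < b i)%N then a i else b i].
Definition fjoin (a b : box) : box := [ffun i => if (a i < b i)%N then b i else a i].

Lemma fmeetE a b i : (fmeet a b i : nat) = minn (a i) (b i).
Proof. by rewrite ffunE /minn; case: ifP. Qed.

Lemma fjoinE a b i : (fjoin a b i : nat) = maxn (a i) (b i).
Proof. by rewrite ffunE /maxn; case: ifP. Qed.

Definition agree_from (k : nat) (p a : box) : bool :=
  [forall i : 'I_d, (k <= i)%N ==> (a i == p i)].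

Definition fupd (p : box) (j : 'I_d) (t : 'I_n.+1) : box :=
  [ffun i => if i == j then t else p i].

Lemma agree_from0 p a : agree_from 0 p a = (a == p).
Proof.
apply/forallP/eqP => [ap|-> i]; last by rewrite eqxx implybT.
by apply/ffunP => i; apply/eqP; exact: (implyP (ap i)).
Qed.

Lemma agree_from_dim p a : agree_from d p a.
Proof. by apply/forallP => i; rewrite leqNgt ltn_ord. Qed.

Lemma sum_agree_fromS k (kd : (k < d)%N) (F : box -> R) p :
  \sum_(a | agree_from k.+1 p a) F a =
  \sum_(t < n.+1) \sum_(a | agree_from k (fupd p (Ordinal kd) (inord t)) a) F a.
Proof.
set j := Ordinal kd.
rewrite (partition_big (fun a : box => a j) xpredT) //=.
apply: eq_bigr => t _; rewrite inord_val; apply: eq_bigl => a.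
apply/andP/forallP => [[/forallP ap /eqP aj] i|ap].
  apply/implyP => ki; rewrite ffunE; have [->|ij] := eqVneq i j; first by rewrite aj.
  apply: (implyP (ap i)); rewrite ltn_neqAle ki andbT.
  by apply: contraNneq ij => ki'; apply/eqP/val_inj; rewrite /= ki'.
split; last by have := implyP (ap j) (leqnn k); rewrite ffunE eqxx.
apply/forallP => i; apply/implyP => ki.
have := implyP (ap i) (ltnW ki); rewrite ffunE.
by have [ij|//] := eqVneq i j; move: ki; rewrite ij ltnn.
Qed.

Lemma fmeet_fupd p q j (t s : nat) : (t < n.+1)%N -> (s < n.+1)%N ->
  fmeet (fupd p j (inord t)) (fupd q j (inord s)) = fupd (fmeet p q) j (inord (minn t s)).
Proof.
move=> tn sn; apply/ffunP => i; apply: val_inj; rewrite /= fmeetE !ffunE.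
case: (i == j); last by rewrite /minn; case: ifP.
by rewrite !inordK // gtn_min tn.
Qed.

Lemma fjoin_fupd p q j (t s : nat) : (t < n.+1)%N -> (s < n.+1)%N ->
  fjoin (fupd p j (inord t)) (fupd q j (inord s)) = fupd (fjoin p q) j (inord (maxn t s)).
Proof.
move=> tn sn; apply/ffunP => i; apply: val_inj; rewrite /= fjoinE !ffunE.
case: (i == j); last by rewrite /maxn; case: ifP.
by rewrite !inordK // gtn_max tn sn.
Qed.

Variables (al be ga de : box -> R).
Hypotheses (al0 : forall a, 0 <= al a) (be0 : forall a, 0 <= be a).
Hypotheses (ga0 : forall a, 0 <= ga a) (de0 : forall a, 0 <= de a).
Hypothesis four : forall a b, al a * be b <= ga (fmeet a b) * de (fjoin a b).

(* Induction on the number [k] of free coordinates; the others are frozen to those of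
   [p], [q], [fmeet p q], [fjoin p q] respectively. *)
Lemma four_functions_agree_from k : (k <= d)%N -> forall p q,
  (\sum_(a | agree_from k p a) al a) * (\sum_(a | agree_from k q a) be a) <=
  (\sum_(a | agree_from k (fmeet p q) a) ga a) *
  (\sum_(a | agree_from k (fjoin p q) a) de a).
Proof.
elim: k => [|k IH] kd p q.
  by rewrite !(eq_bigl _ _ (agree_from0 _)) !big_pred1_eq.
rewrite !(sum_agree_fromS kd).
pose slice (F : box -> R) r (t : nat) :=
  \sum_(a | agree_from k (fupd r (Ordinal kd) (inord t)) a) F a.
apply: (@four_functions_chain _ n.+1 (slice al p) (slice be q)
  (slice ga (fmeet p q)) (slice de (fjoin p q))) => [t|t|t|t|t s tn sn];
  rewrite ?sumr_ge0 //.
by rewrite /slice -fmeet_fupd // -fjoin_fupd //; apply: IH; apply: ltnW.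
Qed.

Theorem four_functions :
  (\sum_a al a) * (\sum_a be a) <= (\sum_a ga a) * (\sum_a de a).
Proof.
have := four_functions_agree_from (leqnn d) [ffun => ord0] [ffun => ord0].
by rewrite !(eq_bigl _ _ (agree_from_dim _)).
Qed.

End FourFunctionsBox.

Section LogConcaveSequences.
Variable R : realFieldType.

Lemma log_concave_cross_le (phi : nat -> R) (m : nat) :
  (forall k, (k <= m)%N -> 0 < phi k) ->
  (forall k, (k.+2 <= m)%N -> phi k.+2 * phi k <= phi k.+1 ^+ 2) ->
  forall a b, (a <= b)%N -> (b < m)%N -> phi b.+1 * phi a <= phi a.+1 * phi b.
Proof.
move=> pos lc a; elim=> [|b IH] ab bm; first by move: ab; rewrite leqn0 => /eqP ->.
move: ab; rewrite leq_eqVlt => /orP[/eqP <- //|]; rewrite ltnS => ab.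
have {}IH := IH ab (ltnW bm).
have lcb := lc b bm.
have pa : 0 < phi a by apply: pos; lia.
have pa1 : 0 < phi a.+1 by apply: pos; lia.
have pb1 : 0 < phi b.+1 by apply: pos; lia.
have pb2 : 0 < phi b.+2 by apply: pos; lia.
rewrite -(ler_pM2r pb1).
(* multiply the inductive hypothesis by [phi b.+2] and use [lc b] *)
apply: (le_trans (y := phi b.+2 * (phi a.+1 * phi b))); first nra.
rewrite expr2 in lcb; nra.
Qed.

Lemma log_concave_ends_le (phi : nat -> R) (m : nat) :
  (forall k, (k <= m)%N -> 0 < phi k) ->
  (forall k, (k.+2 <= m)%N -> phi k.+2 * phi k <= phi k.+1 ^+ 2) ->
  forall j, (j <= m)%N -> phi 0 * phi m <= phi j * phi (m - j)%N.
Proof.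
move=> pos lc.
have half j : (j.*2 <= m)%N -> phi 0 * phi m <= phi j * phi (m - j)%N.
  elim: j => [|j IH] jm; first by rewrite subn0.
  have jm' : (j.*2 <= m)%N by apply: leq_trans jm; rewrite doubleS ltnW.
  apply: le_trans (IH jm') _.
  have -> : (m - j)%N = (m - j.+1).+1 by lia.
  by rewrite mulrC; apply: (log_concave_cross_le pos lc); lia.
move=> j jm; have [|mj] := leqP j.*2 m; first exact: half.
have /half : ((m - j).*2 <= m)%N by lia.
by rewrite subKn // [phi (m - j)%N * _]mulrC.
Qed.

End LogConcaveSequences.

Section LogConcaveZ.
Variables (R : realType) (g : int -> R).
Hypotheses (g0 : forall n, 0 <= g n) (lcg : log_concave_Z g).

Lemma log_concave_Z_le (s u v t : int) : s <= u -> s <= v -> u + v = s + t ->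
  g s * g t <= g u * g v.
Proof.
move=> su sv uvst; have [I [supp lc]] := lcg.
have [->|gs] := eqVneq (g s) 0; first by rewrite mul0r mulr_ge0.
have [->|gt] := eqVneq (g t) 0; first by rewrite mulr0 mulr_ge0.
have sI : (s%:~R : R) \in I by apply/supp; rewrite lt_def gs g0.
have tI : (t%:~R : R) \in I by apply/supp; rewrite lt_def gt g0.
have [m tE] : exists m : nat, t = s + m%:Z.
  by exists `|t - s|%N; rewrite gez0_abs ?subr_ge0; [ring | lia].
have [j uE] : exists j : nat, u = s + j%:Z.
  by exists `|u - s|%N; rewrite gez0_abs ?subr_ge0; [ring | lia].
have jm : (j <= m)%N by lia.
have vE : v = s + (m - j)%N%:Z by lia.
have inI k : (k <= m)%N -> ((s + k%:Z)%:~R : R) \in I.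
  move=> km; apply: (interval_is_interval sI tI); rewrite !ler_int; lia.
rewrite uE vE tE -[s in g s]addr0.
apply: (log_concave_ends_le (phi := fun k => g (s + k%:Z))) => // [k km|k km].
  exact/supp/inI.
have := lc _ (inI k.+1 (ltnW km)).
by rewrite -addrA -[s + _ - 1]addrA; congr (g (s + _) * g (s + _) <= _); lia.
Qed.

Lemma log_concave_Z_tp2 (x y w v : int) :
  g (x - w) * g (y - v) <= g (Num.min x y - Num.min w v) * g (Num.max x y - Num.max w v).
Proof.
have [xy|yx] := lerP x y; have [wv|vw] := lerP w v => //.
- by apply: log_concave_Z_le; lia.
- by rewrite mulrC; apply: log_concave_Z_le; lia.
- by rewrite mulrC.
Qed.

End LogConcaveZ.

Section ConvolutionIntegrand.
Variables (R : realType) (d : nat).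

Definition log_supermodular_kernel (g : Zd d -> R) : Prop :=
  forall x y w v : Zd d,
    g (x - w) * g (y - v) <= g (zmeet x y - zmeet w v) * g (zjoin x y - zjoin w v).

Lemma prod_log_concave_kernel (gi : 'I_d -> int -> R) :
  (forall i n, 0 <= gi i n) -> (forall i, log_concave_Z (gi i)) ->
  log_supermodular_kernel (fun z => \prod_(i < d) gi i (z i)).
Proof.
move=> g0 lcg x y w v; rewrite -!big_split /=.
apply: ler_prod => i _; rewrite mulr_ge0 //= !ffunE.
exact: log_concave_Z_tp2.
Qed.

Lemma conv_integrand_four_functions (f g : Zd d -> R) :
  (forall z, 0 <= f z) -> (forall z, 0 <= g z) ->
  log_supermodular f -> log_supermodular_kernel g ->
  forall x y w v : Zd d,
    f w * g (x - w) * (f v * g (y - v)) <=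
    f (zmeet w v) * g (zmeet x y - zmeet w v) * (f (zjoin w v) * g (zjoin x y - zjoin w v)).
Proof.
move=> f0 g0 lsf lsg x y w v; rewrite mulrACA [X in _ <= X]mulrACA.
by apply: ler_pM; rewrite ?mulr_ge0.
Qed.

End ConvolutionIntegrand.

Local Open Scope classical_set_scope.

Section NonnegativeSums.
Variables (T : choiceType) (R : realType).
Implicit Types (h : T -> R) (X Y : set T).

Lemma esum_le_of_fsum_le h (c : R) : (forall X, finite_set X -> \sum_(w \in X) h w <= c) ->
  (\esum_(z in setT) (h z)%:E <= c%:E)%E.
Proof.
by move=> hc; apply: ge_ereal_sup => _ [X [finX _] <-]; rewrite fsumEFin // lee_fin hc.
Qed.

Lemma fine_esum_le h (c : R) : (forall X, finite_set X -> \sum_(w \in X) h w <= c) ->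
  fine (\esum_(z in setT) (h z)%:E) <= c.
Proof.
move=> hc; have := esum_le_of_fsum_le hc.
case: (\esum_(z in setT) (h z)%:E) => [r||] //= _.
by have := hc set0 (finite_set0 _); rewrite fsbig_set0.
Qed.

Lemma summable_fun_bounded h (c : R) : (forall z, 0 <= h z) ->
  (forall X, finite_set X -> \sum_(w \in X) h w <= c) -> summable_fun h.
Proof.
move=> h0 hc; rewrite /summable_fun /summable.
under eq_esum do rewrite abse_EFin ger0_norm //.
exact: le_lt_trans (esum_le_of_fsum_le hc) (ltry c).
Qed.

Lemma fsum_le_fine_esum h X : (forall z, 0 <= h z) -> summable_fun h -> finite_set X ->
  \sum_(w \in X) h w <= fine (\esum_(z in setT) (h z)%:E).
Proof.
move=> h0 hs finX.
have esum_fin : \esum_(z in setT) (h z)%:E \is a fin_num.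
  rewrite ge0_fin_numE; last by apply: esum_ge0 => z _; rewrite lee_fin.
  by under eq_esum do rewrite -[(h _)%:E]gee0_abs ?lee_fin //.
rewrite -lee_fin fineK // -fsumEFin //.
by apply: esum_ge; exists X.
Qed.

Lemma fine_esum_mulr_le (h1 h2 : T -> R) (c : R) :
  (forall z, 0 <= h1 z) -> (forall z, 0 <= h2 z) ->
  (forall X Y, finite_set X -> finite_set Y ->
     (\sum_(w \in X) h1 w) * (\sum_(w \in Y) h2 w) <= c) ->
  fine (\esum_(z in setT) (h1 z)%:E) * fine (\esum_(z in setT) (h2 z)%:E) <= c.
Proof.
move=> h1_0 h2_0 hc.
have c0 : 0 <= c.
  by have := hc set0 set0 (finite_set0 _) (finite_set0 _); rewrite !fsbig_set0 mulr0.
set F2 := fine (\esum_(z in setT) (h2 z)%:E).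
have [->|F2_neq0] := eqVneq F2 0; first by rewrite mulr0.
have F2_gt0 : 0 < F2 by rewrite lt_def F2_neq0 fine_ge0 // esum_ge0 // => z _; rewrite lee_fin.
rewrite -ler_pdivlMr //; apply: fine_esum_le => X finX; rewrite ler_pdivlMr //.
set s := \sum_(w \in X) h1 w.
have [->|s_neq0] := eqVneq s 0; first by rewrite mul0r.
have s_gt0 : 0 < s by rewrite lt_def s_neq0 fsumr_ge0.
rewrite mulrC -ler_pdivlMr //; apply: fine_esum_le => Y finY.
by rewrite ler_pdivlMr // mulrC; exact: hc.
Qed.

End NonnegativeSums.

Section Boxes.
Variable d : nat.

Definition box_emb (B n : nat) (a : {ffun 'I_d -> 'I_n.+1}) : Zd d :=
  [ffun i => (a i : nat)%:Z - B%:Z].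

Lemma box_emb_inj B n : injective (@box_emb B n).
Proof.
move=> a b /ffunP ab; apply/ffunP => i; apply: val_inj.
by have := ab i; rewrite !ffunE => /addIr [].
Qed.

Lemma box_emb_meet B n a b :
  box_emb B (fmeet a b) = zmeet (@box_emb B n a) (box_emb B b).
Proof.
apply/ffunP => i; rewrite !ffunE /=.
have [ab|ba] := ltnP (a i) (b i).
  by rewrite min_l // lerD2r lez_nat ltnW.
by rewrite min_r // lerD2r lez_nat.
Qed.

Lemma box_emb_join B n a b :
  box_emb B (fjoin a b) = zjoin (@box_emb B n a) (box_emb B b).
Proof.
apply/ffunP => i; rewrite !ffunE /=.
have [ab|ba] := ltnP (a i) (b i).
  by rewrite max_r // lerD2r lez_nat ltnW.
by rewrite max_l // lerD2r lez_nat.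
Qed.

Lemma box_emb_cover (S : set (Zd d)) : finite_set S ->
  exists B, S `<=` range (@box_emb B (B + B)).
Proof.
move=> /finite_seqP [s ->].
exists (\sum_(w <- s) \sum_(i < d) `|w i|)%N => w sw.
set B := (\sum_(w <- s) _)%N.
have wB i : (`|w i| <= B)%N by rewrite /B (big_rem w sw) /= (bigD1 i) //= -addnA leq_addr.
exists [ffun i => inord `|w i + B%:Z|] => //; apply/ffunP => i.
have := wB i; rewrite -lez_nat abszE ler_norml => /andP[wi_ge wi_le].
have wiB_ge0 : 0 <= w i + B%:Z by lia.
rewrite !ffunE inordK; first by rewrite gez0_abs // addrK.
by rewrite -ltz_nat gez0_abs //; lia.
Qed.

End Boxes.

Lemma fsum_range (T : finType) (U : choiceType) (R : realType) (e : T -> U) (h : U -> R) :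
  injective e -> (\sum_(w \in range e) (h w)%:E)%E = (\sum_a h (e a))%:E.
Proof.
move=> e_inj; rewrite fsbig_image; last by move=> a b _ _ /e_inj.
have -> : [set: T] = [set` enum T] by apply/seteqP; split => a //= _; rewrite mem_enum.
by rewrite -fsbig_seq ?enum_uniq // sumEFin big_enum.
Qed.

Theorem four_functions_Zd (R : realType) (d : nat) (h1 h2 h3 h4 : Zd d -> R) :
  (forall z, 0 <= h1 z) -> (forall z, 0 <= h2 z) ->
  (forall z, 0 <= h3 z) -> (forall z, 0 <= h4 z) ->
  summable_fun h3 -> summable_fun h4 ->
  (forall a b, h1 a * h2 b <= h3 (zmeet a b) * h4 (zjoin a b)) ->
  fine (\esum_(z in setT) (h1 z)%:E) * fine (\esum_(z in setT) (h2 z)%:E) <=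
  fine (\esum_(z in setT) (h3 z)%:E) * fine (\esum_(z in setT) (h4 z)%:E).
Proof.
move=> h1_0 h2_0 h3_0 h4_0 h3s h4s h1234.
apply: fine_esum_mulr_le => // X Y finX finY.
have [B XY_box] : exists B, X `|` Y `<=` range (@box_emb d B (B + B)).
  by apply: box_emb_cover; rewrite finite_setU.
set e := @box_emb d B (B + B).
have e_inj : injective e := @box_emb_inj d B (B + B).
have fin_e : finite_set (range e) by apply: finite_image; exact: finite_finset.
have box_le (h : Zd d -> R) (Z : set (Zd d)) : (forall z, 0 <= h z) ->
    finite_set Z -> Z `<=` X `|` Y -> \sum_(w \in Z) h w <= \sum_a h (e a).
  move=> h0 finZ ZXY; rewrite -lee_fin -fsum_range // -fsumEFin //.
  apply: lee_fsum_nneg_subset => //; first by move=> w; rewrite !inE => /ZXY/XY_box.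
  by move=> w _; rewrite lee_fin.
have le_fine_esum (h : Zd d -> R) : (forall z, 0 <= h z) -> summable_fun h ->
    \sum_a h (e a) <= fine (\esum_(z in setT) (h z)%:E).
  by move=> h0 hs; rewrite -lee_fin -fsum_range // fsumEFin // lee_fin fsum_le_fine_esum.
apply: le_trans (_ : _ <= (\sum_a h1 (e a)) * (\sum_a h2 (e a))) _.
  apply: ler_pM; rewrite ?fsumr_ge0 //.
  - by apply: box_le => // w; left.
  - by apply: box_le => // w; right.
apply: le_trans (_ : _ <= (\sum_a h3 (e a)) * (\sum_a h4 (e a))) _.
  by apply: four_functions => // a b; rewrite /e box_emb_meet box_emb_join h1234.
by apply: ler_pM; rewrite ?sumr_ge0 ?le_fine_esum.
Qed.

Lemma zconvE (R : realType) (d : nat) (f g : Zd d -> R) (x : Zd d) :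
  zconv f g x = fine (\esum_(w in setT) (f w * g (x - w))%:E).
Proof.
rewrite /zconv (reindex_esum setT setT (fun w => x - w)).
  by congr fine; apply: eq_esum => w _; rewrite subKr.
by rewrite setTT_bijective; exact: inv_bij (subKr x).
Qed.

Unset Implicit Arguments.

Theorem theorem3p5 (R : realType) (d : nat)
  (gi : 'I_d -> int -> R) (f : {ffun 'I_d -> int} -> R) :
  (forall i n, 0 <= gi i n) ->
  (forall i, summable_fun (gi i)) ->
  (forall i, log_concave_Z (gi i)) ->
  (forall z, 0 <= f z) ->
  summable_fun f ->
  log_supermodular f ->
  log_supermodular (zconv f (fun z => \prod_(i < d) gi i (z i))).
Proof.
move=> g0 gs lcg f0 fs lsf x y.
set g := fun z => \prod_(i < d) gi i (z i).
have g_ge0 z : 0 <= g z by apply: prodr_ge0.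
pose M := \prod_(i < d) fine (\esum_(n in setT) (gi i n)%:E).
have g_le z : g z <= M.
  apply: ler_prod => i _; rewrite g0 /=.
  have := fsum_le_fine_esum (g0 i) (gs i) (finite_set1 (z i)).
  by rewrite fsbig_set1.
have integrand_summable u : summable_fun (fun w => f w * g (u - w)).
  apply: (@summable_fun_bounded _ _ _ (fine (\esum_(z in setT) (f z)%:E) * M)).
    by move=> w; rewrite mulr_ge0.
  move=> X finX; apply: le_trans (_ : _ <= \sum_(w \in X) f w * M) _.
    by rewrite !fsbig_finite //; apply: ler_sum => w _; rewrite ler_wpM2l.
  by rewrite -mulr_fsuml ler_wpM2r ?fsum_le_fine_esum // (le_trans (g_ge0 0)).
have integrand_ge0 u w : 0 <= f w * g (u - w) by rewrite mulr_ge0.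
rewrite !zconvE; apply: (four_functions_Zd (integrand_ge0 _) (integrand_ge0 _)
  (integrand_ge0 _) (integrand_ge0 _) (integrand_summable _) (integrand_summable _)).
exact: conv_integrand_four_functions f0 g_ge0 lsf (prod_log_concave_kernel g0 lcg) x y.
Qed.
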